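(* Let $T=2^t$ with $t\ge1$, and let $A_1,\ldots,A_r$ be subsets of $\mathbb Z_T$, each of size at least $2$, with $r\ge T^3$. Then the multiset $A_1+A_2+\cdots+A_r$ has bias at most $O(T^{3/2}/r^{1/2})$ with respect to the subgroup $\{0,2^{t-1}\}$ (i.e. at most $c_0T^{3/2}/r^{1/2}$ for an absolute constant $c_0$).
   Context: $\mathbb Z_T$ is the additive cyclic group of order $T$. For multisets $A,B$ of $\mathbb Z_T$, $A+B$ is the multiset $\{a+b: a\in A, b\in B\}$ (with multiplicities). $\mu_A(x)$ denotes the multiplicity of $x$ in $A$. A multiset $A$ has bias at most $\epsilon$ with respect to a subgroup $H\le\mathbb Z_T$ if $\mu_A(a)\le(1+\epsilon)\mu_A(a+h)$ for all $a\in A$ and all $h\in H$. *)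

From HB Require Import structures.
From mathcomp Require Import all_boot all_order all_algebra.
From mathcomp Require Import all_reals.
Set Implicit Arguments. Unset Strict Implicit. Unset Printing Implicit Defensive.
Import Order.TTheory GRing.Theory Num.Theory.
Local Open Scope ring_scope.

Definition sumset_mult (G : finZmodType) (r : nat) (A : 'I_r -> {set G}) (x : G) : nat :=
  #|[set f : {ffun 'I_r -> G} | [forall i, f i \in A i] && (\sum_(i < r) f i == x)]|.

Definition bias_at_most (R : numDomainType) (G : finZmodType) (mu : G -> nat)
    (H : {set G}) (eps : R) : Prop :=
  forall a h, (0 < mu a)%N -> h \in H -> (mu a)%:R <= (1 + eps) * (mu (a + h))%:R.

From HB Require Import structures.
From mathcomp Require Import all_boot all_order all_algebra fingroup cyclic all_reals.
From mathcomp Require Import zify ring lra.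

Set Implicit Arguments.
Unset Strict Implicit.
Unset Printing Implicit Defensive.

Import Order.TTheory GRing.Theory Num.Theory FinRing.Theory.

(* Since every A_i contains two distinct elements, prod_i 2(|A_i| - 1) times
   the multiplicity function of A_1 + ... + A_r is a nonnegative combination of
   subset-sum counts a |-> #{S | c + sum_(i in S) d_i = a} with all steps d_i
   nonzero (one count for each choice of ordered pairs x_i <> y_i in A_i, with
   c = sum_i x_i and d_i = y_i - x_i), so it suffices to bound the bias of
   such a count.
   By pigeonhole some nonzero step g occurs m >= r/T times; fixing the set of
   the other steps used, what remains is a translate of
   beta(b) = sum_(k g = b) C(m, k).  As T is a power of 2, the element
   h = 2^(t-1) is a multiple s g of every nonzero g, with s minimal.  The k
   with k g = b are then at least s apart, so shifting them all by s changes
   sum C(m, k) by at most the total descent of k |-> C(m, k), which is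
   C(m, m/2).  Hence every value of beta is at most beta(b + h) + C(m, m/2), and
   comparing with the total mass 2^m of beta on T points gives
   C(m, m/2) <= eps beta(b + h) as soon as T C(m, m/2) (1 + eps) <= eps 2^m.
   The estimate C(m, m/2)^2 3m <= 2 4^m makes this hold for
   eps = 10 T^(3/2) / sqrt r. *)

(** * Binomial coefficients *)

Lemma leq_binS m l : l.*2 < m -> 'C(m, l) <= 'C(m, l.+1).
Proof.
move=> lt_lm; rewrite -(leq_pmul2l (ltn0Sn l)) mul_bin_left leq_mul2r.
by apply/orP; right; lia.
Qed.

Lemma geq_binS m l : m <= l.*2.+1 -> 'C(m, l.+1) <= 'C(m, l).
Proof.
move=> le_ml; rewrite -(leq_pmul2l (ltn0Sn l)) mul_bin_left leq_mul2r.
by apply/orP; right; lia.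
Qed.

Lemma sum_bin_descents m N :
  \sum_(0 <= l < N) ('C(m, l) - 'C(m, l.+1)) <= 'C(m, m./2).
Proof.
set h := m./2; have h_mid : h.*2 <= m <= h.*2.+1.
  by have := odd_double_half m; rewrite -/h; case: odd => /=; lia.
have head : \sum_(0 <= l < h) ('C(m, l) - 'C(m, l.+1)) = 0.
  rewrite big_nat_cond big1 // => l /andP[/andP[_ lt_lh] _].
  by apply/eqP; rewrite subn_eq0 leq_binS //; lia.
have tail n :
    \sum_(h <= l < h + n) ('C(m, l) - 'C(m, l.+1)) + 'C(m, h + n) = 'C(m, h).
  elim: n => [|n IHn]; first by rewrite addn0 big_geq.
  rewrite addnS big_nat_recr ?leq_addr //= -{}IHn.
  by have := @geq_binS m (h + n); lia.
apply: (@leq_trans (\sum_(0 <= l < h + N) ('C(m, l) - 'C(m, l.+1)))).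
  by rewrite [X in _ <= X](@big_cat_nat _ _ _ N) ?leq_addl //= leq_addr.
by rewrite (@big_cat_nat _ _ _ h) ?leq_addr //= head -(tail N) leq_addr.
Qed.

Lemma bin_odd_mid n : 'C(n.*2.+1, n.+1) = 'C(n.*2.+1, n).
Proof. by rewrite -[RHS]bin_sub; [congr 'C(_, _) |]; lia. Qed.

Lemma bin_central_succ n : 'C(n.+1.*2, n.+1) = 2 * 'C(n.*2.+1, n).
Proof. by rewrite doubleS binS bin_odd_mid addnn mul2n. Qed.

Lemma mul_bin_central n : n.+1 * 'C(n.*2.+1, n) = n.*2.+1 * 'C(n.*2, n).
Proof. by rewrite -bin_odd_mid -mul_bin_diag. Qed.

Lemma central_bin_sqr_le n : 'C(n.*2, n) ^ 2 * (3 * n + 1) <= 16 ^ n.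
Proof.
elim: n => [|n IHn]; first by rewrite bin0.
rewrite -(@leq_pmul2l (n.+1 ^ 2)) ?expn_gt0 // bin_central_succ.
have cubic : n.*2.+1 ^ 2 * (3 * n + 4) <= 4 * n.+1 ^ 2 * (3 * n + 1).
  by rewrite -muln2; nia.
have -> : n.+1 ^ 2 * ((2 * 'C(n.*2.+1, n)) ^ 2 * (3 * n.+1 + 1))
    = 4 * (n.+1 * 'C(n.*2.+1, n)) ^ 2 * (3 * n + 4) by ring.
set c := 'C(n.*2, n) in IHn *; rewrite mul_bin_central.
have -> : 4 * (n.*2.+1 * c) ^ 2 * (3 * n + 4)
    = 4 * c ^ 2 * (n.*2.+1 ^ 2 * (3 * n + 4)) by ring.
apply: (leq_trans (leq_mul (leqnn _) cubic)).
have -> : 4 * c ^ 2 * (4 * n.+1 ^ 2 * (3 * n + 1))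
    = n.+1 ^ 2 * 16 * (c ^ 2 * (3 * n + 1)) by ring.
by rewrite [16 ^ n.+1]expnS [X in _ <= X]mulnA leq_mul.
Qed.

Lemma mid_bin_sqr_le m : 'C(m, m./2) ^ 2 * (3 * m) <= 2 * 4 ^ m.
Proof.
have four_double n : 4 ^ n.*2 = 16 ^ n by rewrite -mul2n expnM.
have := odd_double_half m; move: m./2 => n; case: odd => /= <-.
- have := central_bin_sqr_le n.+1.
  rewrite add1n bin_central_succ expnMn [16 ^ _]expnS [4 ^ _]expnS four_double.
  set x := 'C(_, n) ^ 2; set P := 16 ^ n; rewrite -!muln2; nia.
- have := central_bin_sqr_le n.
  rewrite add0n four_double; set x := 'C(_, n) ^ 2; set P := 16 ^ n; rewrite -!muln2; nia.
Qed.

(** * Shifting sums along sparse sets of indices *)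

Lemma leq_telescope (a : nat -> nat) k s :
  a k <= a (k + s) + \sum_(k <= l < k + s) (a l - a l.+1).
Proof.
elim: s => [|s IHs]; first by rewrite addn0 big_geq ?addn0.
rewrite addnS big_nat_recr ?leq_addr //=.
by move: IHs; set S := \sum_(_ <= _ < _) _; lia.
Qed.

Lemma sum_sparse_intervals (d : nat -> nat) (P : pred nat) s N M :
  (forall k k', P k -> P k' -> k < k' -> k + s <= k') ->
  (forall k, k < N -> P k -> k + s <= M) ->
  \sum_(0 <= k < N | P k) \sum_(k <= l < k + s) d l <= \sum_(0 <= l < M) d l.
Proof.
move=> sparseP; elim: N M => [|N IHN] M boundM; first by rewrite big_geq.
rewrite big_mkcond big_nat_recr //= -big_mkcond /=.
case: ifP => PN; last by rewrite addn0; apply: IHN => k lt_kN; apply: boundM; lia.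
have le_NsM : N + s <= M by apply: boundM.
rewrite (@big_cat_nat _ _ _ N 0 M) //=; last by lia.
apply: leq_add; first by apply: IHN => k lt_kN Pk; exact: sparseP.
by rewrite (@big_cat_nat _ _ _ (N + s) N M) ?leq_addr //= leq_addr.
Qed.

Lemma sum_sparse_shift (a : nat -> nat) (P : pred nat) s N :
  (forall k k', P k -> P k' -> k < k' -> k + s <= k') ->
  \sum_(0 <= k < N | P k) a k
    <= \sum_(0 <= k < N | P k) a (k + s) + \sum_(0 <= l < N + s) (a l - a l.+1).
Proof.
move=> sparseP.
apply: (@leq_trans (\sum_(0 <= k < N | P k)
    (a (k + s) + \sum_(k <= l < k + s) (a l - a l.+1)))).
  by apply: leq_sum => k _; apply: leq_telescope.
rewrite big_split leq_add2l /=.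
by apply: sum_sparse_intervals => // k lt_kN _; rewrite leq_add2r ltnW.
Qed.

Lemma sum_bin_widen m N (Q : pred nat) : m < N ->
  \sum_(0 <= k < N | Q k) 'C(m, k) = \sum_(0 <= k < m.+1 | Q k) 'C(m, k).
Proof.
move=> lt_mN; rewrite (@big_cat_nat _ _ _ m.+1) //= [X in _ + X = _]big_nat_cond.
by rewrite [X in _ + X = _]big1 ?addn0 // => k /andP[/andP[lt_mk _] _]; apply: bin_small.
Qed.

Lemma sum_bin_shift_le m s (P Q : pred nat) :
  (forall k, P k -> Q (k + s)) ->
  \sum_(0 <= k < m.+1 | P k) 'C(m, k + s) <= \sum_(0 <= k < m.+1 | Q k) 'C(m, k).
Proof.
move=> PQ.
apply: (@leq_trans (\sum_(0 <= k < m.+1 | Q (k + s)) 'C(m, k + s))).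
  by apply: (@sub_le_big _ addn leq leqnn (fun x y => leq_addr y x)) => k /PQ.
rewrite -{1}[m.+1](addnK s) -big_addn add0n.
rewrite -[X in _ <= X](@sum_bin_widen m (m.+1 + s)) ?leq_addr //.
by rewrite [X in _ <= X](@big_cat_nat _ _ _ s) ?leq_addl //= leq_addl.
Qed.

(** * Binomially weighted multiples in an abelian group *)

Local Open Scope ring_scope.

Definition binomial_count (G : zmodType) (g : G) m (b : G) : nat :=
  (\sum_(0 <= k < m.+1 | g *+ k == b) 'C(m, k))%N.

Lemma binomial_count_shift (G : zmodType) (g b b' : G) m :
  (exists j, b' = b + g *+ j) ->
  (binomial_count g m b <= binomial_count g m b' + 'C(m, m./2))%N.
Proof.
move=> ex_j.
have /ex_minnP[s /eqP def_b' min_s] : exists j, b' == b + g *+ j.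
  by case: ex_j => j ->; exists j.
(* Two solutions closer than s would yield the shorter shift s - (k' - k). *)
have sparse k k' : g *+ k == b -> g *+ k' == b -> (k < k')%N -> (k + s <= k')%N.
  move=> /eqP gk /eqP gk' lt_kk'; rewrite leqNgt; apply/negP => lt_k's.
  have period : g *+ (k' - k) = 0 by rewrite mulrnBr ?gk ?gk' ?subrr // ltnW.
  have := min_s (s - (k' - k))%N.
  by rewrite mulrnBr ?period ?subr0 -?def_b' ?eqxx; lia.
apply: leq_trans (@sum_sparse_shift (binomial m) _ s m.+1 sparse) _.
apply: leq_add; last exact: sum_bin_descents.
by apply: sum_bin_shift_le => k /eqP gk; rewrite mulrnDr gk def_b'.
Qed.

Lemma binomial_count_gt0 (G : zmodType) (g : G) m b :
  (0 < binomial_count g m b)%N -> exists k, g *+ k = b.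
Proof.
by rewrite lt0n sum_nat_seq_neq0 => /hasP[k _ /andP[/eqP gk _]]; exists k.
Qed.

Lemma mulrn_card (G : finZmodType) (x : G) : x *+ #|G| = 0.
Proof. by rewrite -zmodXgE -cardsT expg_cardG ?inE. Qed.

Lemma oppr_mulrn_card (G : finZmodType) (x : G) : - x = x *+ #|G|.-1.
Proof.
apply/eqP; rewrite eq_sym -subr_eq0 opprK -mulrSr prednK ?mulrn_card //.
by apply/card_gt0P; exists 0.
Qed.

Lemma sum_binomial_count (G : finZmodType) (g : G) m :
  (\sum_(b : G) binomial_count g m b = 2 ^ m)%N.
Proof.
transitivity (\sum_(0 <= k < m.+1) 'C(m, k))%N.
  by rewrite [RHS](partition_big (fun k => g *+ k) xpredT).
rewrite big_mkord -[2%N]/(1 + 1)%N expnDn.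
by apply: eq_bigr => k _; rewrite !exp1n !muln1.
Qed.

Lemma binomial_count_bias (R : realFieldType) (G : finZmodType) (g h : G) m (eps : R) :
  (exists j, h = g *+ j) -> 0 <= eps ->
  (#|G| * 'C(m, m./2))%:R * (1 + eps) <= eps * (2 ^ m)%:R ->
  forall b, (binomial_count g m b)%:R <= (1 + eps) * (binomial_count g m (b + h))%:R.
Proof.
move=> [s def_h] eps_ge0 small_mid b.
have [->|/binomial_count_gt0[k0 def_b]] := posnP (binomial_count g m b).
  by rewrite mulr_ge0 ?ler0n ?addr_ge0.
set B' := binomial_count g m (b + h).
have dominated b'' : (binomial_count g m b'' <= B' + 'C(m, m./2))%N.
  have [->//|/binomial_count_gt0[k def_b'']] := posnP (binomial_count g m b'').
  apply: binomial_count_shift; exists (k0 + s + k * #|G|.-1)%N.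
  by rewrite -def_b'' -def_b def_h !mulrnDr mulrnA -oppr_mulrn_card [RHS]addrC subrK.
have total : (2 ^ m <= #|G| * (B' + 'C(m, m./2)))%N.
  by rewrite -(sum_binomial_count g m) -sum_nat_const leq_sum.
move: (dominated b) total small_mid; rewrite -!(ler_nat R) !natrM !natrD.
have G_gt0 : 0 < #|G|%:R :> R by rewrite ltr0n; apply/card_gt0P; exists 0.
set B := (binomial_count g m b)%:R; set T := #|G|%:R; set M := 'C(m, m./2)%:R.
move=> near total small_mid.
have : T * M <= T * (eps * B'%:R) by nra.
by rewrite ler_pM2l // => M_le; lra.
Qed.

(** * Subset sums *)

Lemma big_subsets_split (R : Type) (idx : R) (op : Monoid.com_law idx)
    (I : finType) (J : {set I}) (F : {set I} -> R) :
  \big[op/idx]_(S : {set I}) F S =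
  \big[op/idx]_(U : {set I} | U \subset ~: J)
     \big[op/idx]_(V : {set I} | V \subset J) F (U :|: V).
Proof.
rewrite (partition_big (fun S => S :\: J) (fun U => U \subset ~: J)) /=; last first.
  by move=> S _; rewrite setDE subsetIr.
apply: eq_bigr => U UJ; rewrite (reindex_onto (fun V => U :|: V) (fun S => S :&: J)).
  apply: eq_bigl => V; apply/andP/idP => [[_ /eqP <-]|VJ]; first exact: subsetIr.
  have UJ0 : [disjoint U & J] by rewrite disjoints_subset.
  rewrite setDUl setIUl (setDidPl UJ0) (disjoint_setI0 UJ0) (setIidPl VJ).
  have VJ0 : V :\: J = set0 by apply/eqP; rewrite setD_eq0.
  by rewrite VJ0 setU0 set0U.
by move=> S /eqP <-; rewrite setUC setID.
Qed.

Lemma sum_iota_pick (P : pred nat) x n :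
  (x < n)%N -> (\sum_(0 <= k < n | P k) (x == k) = P x)%N.
Proof.
move=> lt_xn; rewrite big_mkcond (bigD1_seq x) ?mem_index_iota ?iota_uniq //=.
rewrite eqxx big1 ?addn0; first by case: (P x).
by move=> k /negPf; rewrite eq_sym => ->; case: (P k).
Qed.

Lemma sum_subsets_mulrn_card (G : zmodType) (I : finType) (J : {set I}) (g b : G) :
  (\sum_(V : {set I} | V \subset J) (g *+ #|V| == b))%N = binomial_count g #|J| b.
Proof.
rewrite /binomial_count.
rewrite (eq_bigr (fun k => \sum_(V : {set I} | V \subset J) (#|V| == k))%N); last first.
  move=> k _; rewrite -cards_draws -sum1dep_card big_mkcondr /=.
  by apply: eq_bigr => V _; case: (_ == _).
rewrite exchange_big /=; apply: eq_bigr => V VJ.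
by rewrite sum_iota_pick // ltnS subset_leq_card.
Qed.

Definition subset_sum_count (G : zmodType) (I : finType) (c : G) (d : I -> G) a : nat :=
  (\sum_(S : {set I}) (c + \sum_(i in S) d i == a)%R)%N.

Lemma subset_sum_count_split (G : zmodType) (I : finType) (c : G) (d : I -> G) (g a : G) :
  subset_sum_count c d a =
  (\sum_(U : {set I} | U \subset ~: [set i | d i == g])
     binomial_count g #|[set i | d i == g]| (a - c - \sum_(i in U) d i))%N.
Proof.
set J := [set i | d i == g]; rewrite /subset_sum_count (big_subsets_split _ J).
apply: eq_bigr => U UJ; rewrite -sum_subsets_mulrn_card; apply: eq_bigr => V VJ.
have UV_disjoint : [disjoint U & V].
  by rewrite disjoints_subset (subset_trans UJ) // setCS.
rewrite (eq_bigl [predU U & V]) ?bigU //=; last by move=> i; rewrite !inE.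
have -> : \sum_(i in V) d i = g *+ #|V|.
  by rewrite -sumr_const; apply: eq_bigr => i /(subsetP VJ); rewrite inE => /eqP.
congr (nat_of_bool _).
by rewrite [RHS]eq_sym !subr_eq [LHS]eq_sym (addrC c) (addrC (\sum_(i in U) d i)).
Qed.

Lemma exists_large_fiber (I J : finType) (f : I -> J) (j0 : J) :
  exists j, (#|I| <= #|[set i | f i == j]| * #|J|)%N.
Proof.
have [j _ max_j] := @arg_maxnP J j0 xpredT (fun j => #|[set i | f i == j]|) erefl.
exists j; rewrite mulnC -sum_nat_const -[X in (X <= _)%N]sum1_card.
rewrite (partition_big f xpredT) //=; apply: leq_sum => j' _.
by apply: leq_trans (max_j j' erefl); rewrite -sum1dep_card.
Qed.

Lemma subset_sum_count_bias (R : realFieldType) (G : finZmodType) (I : finType)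
    (c : G) (d : I -> G) (h : G) (eps : R) :
  (0 < #|I|)%N -> (forall i, d i != 0) ->
  (forall x : G, x != 0 -> exists j, h = x *+ j) -> 0 <= eps ->
  (forall m, (#|I| <= m * #|G|)%N ->
     (#|G| * 'C(m, m./2))%:R * (1 + eps) <= eps * (2 ^ m)%:R) ->
  forall a, (subset_sum_count c d a)%:R <= (1 + eps) * (subset_sum_count c d (a + h))%:R.
Proof.
move=> I_gt0 d_neq0 h_mul eps_ge0 small_mid a.
have [g large_J] := exists_large_fiber d 0.
have g_neq0 : g != 0.
  have : (0 < #|[set i | d i == g]|)%N.
    by move: large_J; rewrite lt0n; case: eqP => // ->; lia.
  by rewrite card_gt0 => /set0Pn[i]; rewrite inE => /eqP <-.
rewrite (subset_sum_count_split c d g a) (subset_sum_count_split c d g (a + h)).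
rewrite !natr_sum mulr_sumr; apply: ler_sum => U _.
rewrite (addrAC a h) (addrAC (a - c) h).
exact: binomial_count_bias (h_mul g g_neq0) eps_ge0 (small_mid _ large_J) _.
Qed.

(** * Sumsets as combinations of subset sums *)

Definition distinct_pair (T : finType) (A : {set T}) (q : T * T) : bool :=
  [&& q.1 \in A, q.2 \in A & q.1 != q.2].

Lemma sum_distinct_pairs_hit (T : finType) (A : {set T}) z :
  (\sum_(q : T * T) distinct_pair A q * ((q.2 == z) + (q.1 == z))
     = 2 * (#|A| - 1) * (z \in A))%N.
Proof.
have others : (\sum_(y : T) [&& z \in A, y \in A & z != y] = (#|A| - 1) * (z \in A))%N.
  case: (boolP (z \in A)) => Az; last by rewrite big1 ?(negPf Az) ?muln0.
  rewrite muln1 (cardsD1 z A) Az add1n subn1 -sum1_card [RHS]big_mkcond /=.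
  by apply: eq_bigr => y _; rewrite !inE eq_sym andbC.
have swapped : (\sum_(q : T * T) distinct_pair A q * (q.1 == z)
    = \sum_(q : T * T) distinct_pair A q * (q.2 == z))%N.
  rewrite (reindex_inj (h := fun q : T * T => (q.2, q.1))) /=; last first.
    by move=> [? ?] [? ?] [-> ->].
  apply: eq_bigr => [[x y]] _; rewrite /distinct_pair /= eq_sym.
  by case: (x \in A); case: (y \in A).
under eq_bigr => q _ do rewrite mulnDr.
rewrite big_split /= swapped addnn -mul2n -mulnA -others; congr (2 * _)%N.
rewrite -(pair_bigA _ (fun x y => distinct_pair A (x, y) * (y == z)))%N /=.
apply: eq_bigr => x _; rewrite (bigD1 z) //= big1 ?addn0 => [|y /negPf ->]; last first.
  by rewrite muln0.
by rewrite eqxx muln1 /distinct_pair /= eq_sym; case: (x \in A); case: (z \in A).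
Qed.

Lemma prod_nat_of_bool (I : finType) (P : pred I) :
  (\prod_i P i = [forall i, P i])%N.
Proof.
case: (boolP [forall i, P i]) => [/forallP allP | /forallPn[i /negPf Pi]].
  by rewrite big1 // => i _; rewrite allP.
by rewrite (bigD1 i) //= Pi.
Qed.

Lemma sum_ffun_pick (I T : finType) (P : pred {ffun I -> T}) (g : {ffun I -> T}) :
  (\sum_(f | P f) \prod_i (g i == f i) = P g)%N.
Proof.
under eq_bigr => f _ do rewrite prod_nat_of_bool.
rewrite big_mkcond (bigD1 g) //= big1 ?addn0.
  by case: (P g) => //=; rewrite (introT forallP) // => i.
move=> f neq_fg; case: (P f) => //; case: forallP => // eq_gf.
by case/negP: neq_fg; apply/eqP/ffunP => i; apply/esym/eqP.
Qed.

Lemma sum_select (G : zmodType) (I : finType) (p : I -> G * G) (S : {set I}) :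
  \sum_i (if i \in S then (p i).2 else (p i).1) =
  \sum_i (p i).1 + \sum_(i in S) ((p i).2 - (p i).1).
Proof.
rewrite [X in _ = _ + X]big_mkcond -big_split /=; apply: eq_bigr => i _.
by case: (i \in S); rewrite ?addr0 // addrC subrK.
Qed.

Lemma sumset_mult_pair_decomposition (G : finZmodType) r (A : 'I_r -> {set G}) a :
  (\prod_i (2 * (#|A i| - 1)) * sumset_mult A a =
   \sum_(p : {ffun 'I_r -> G * G} | [forall i, distinct_pair (A i) (p i)])
      subset_sum_count (\sum_i (p i).1)%R (fun i => (p i).2 - (p i).1)%R a)%N.
Proof.
pose sel (p : {ffun 'I_r -> G * G}) (S : {set 'I_r}) :=
  [ffun i => if i \in S then (p i).2 else (p i).1].
have mult_sum : sumset_mult A a =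
    (\sum_(f : {ffun 'I_r -> G} | (\sum_i f i == a)%R) [forall i, f i \in A i])%N.
  rewrite /sumset_mult -sum1dep_card big_mkcondl /=.
  by apply: eq_bigr => f _; case: ifP.
transitivity (\sum_(f : {ffun 'I_r -> G} | (\sum_i f i == a)%R)
    \sum_(p : {ffun 'I_r -> G * G}) \sum_(S : {set 'I_r})
      [forall i, distinct_pair (A i) (p i)] * \prod_i (sel p S i == f i))%N.
  rewrite mult_sum big_distrr /=; apply: eq_bigr => f _.
  rewrite -prod_nat_of_bool -big_split /=.
  under eq_bigr => i _ do rewrite -sum_distinct_pairs_hit.
  rewrite bigA_distr_bigA; apply: eq_bigr => p _.
  rewrite big_split /= prod_nat_of_bool bigA_distr big_distrr /=.
  apply: eq_bigr => S _; congr (_ * _)%N.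
  by apply: eq_bigr => i _; rewrite ffunE; case: (i \in S).
rewrite exchange_big /= [RHS]big_mkcond /=; apply: eq_bigr => p _.
rewrite exchange_big /=; case: ifP => dp_p; last first.
  by rewrite big1 // => S _; rewrite big1 // => f _; rewrite dp_p.
apply: eq_bigr => S _; under eq_bigr => f _ do rewrite mul1n.
rewrite sum_ffun_pick -(sum_select p S); congr (nat_of_bool (_ == _)).
by apply: eq_bigr => i _; rewrite ffunE.
Qed.

(** * The group Z_(2^t) and the final estimate *)

Lemma pow2_half_multiple t d :
  (0 < d < 2 ^ t.+1)%N -> exists j, (d * j %% 2 ^ t.+1 = 2 ^ t)%N.
Proof.
case/andP=> d_gt0 lt_d; have [u odd_u def_d] := pfactor_coprime (isT : prime 2) d_gt0.
rewrite coprime_sym coprimen2 in odd_u; set v := logn 2 d in def_d.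
have le_vt : (v <= t)%N.
  rewrite -ltnS -(@ltn_exp2l 2) //; apply: leq_ltn_trans lt_d.
  by rewrite def_d leq_pmull // odd_gt0.
exists (2 ^ (t - v))%N; rewrite def_d -mulnA -expnD subnKC //.
rewrite -[u](odd_double_half u) odd_u mulnDl mul1n -muln2 -mulnA -expnS addnC.
by rewrite modnMDl modn_small // ltn_exp2l.
Qed.

Lemma Zp_pow2_half t (x : 'Z_(2 ^ t.+1)) : x != 0 -> exists j, (2 ^ t)%:R = x *+ j.
Proof.
have T_gt1 : (1 < 2 ^ t.+1)%N by rewrite -{1}(expn0 2) ltn_exp2l.
move=> x_neq0; have [j xj] : exists j, (x * j %% 2 ^ t.+1 = 2 ^ t)%N.
  apply: pow2_half_multiple; have := ltn_ord x; rewrite [X in (_ < X)%N]Zp_cast // => ->.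
  by rewrite andbT lt0n; apply: contra x_neq0 => /eqP x0; apply/eqP/val_inj.
exists j; apply: val_inj; rewrite Zp_mulrn /= [X in (_ %% X)%N]Zp_cast // xj.
by rewrite val_Zp_nat // modn_small // ltn_exp2l.
Qed.

Lemma card_Zp_pow2 t : #|'Z_(2 ^ t.+1)| = (2 ^ t.+1)%N.
Proof. by rewrite card_ord Zp_cast // -{1}(expn0 2) ltn_exp2l. Qed.

Lemma mid_bin_bias_bound (R : realFieldType) (T r m : nat) (eps : R) :
  (0 < T)%N -> (T ^ 3 <= r)%N -> (r <= m * T)%N ->
  0 <= eps -> eps ^+ 2 * r%:R = 100 * T%:R ^+ 3 ->
  (T * 'C(m, m./2))%:R * (1 + eps) <= eps * (2 ^ m)%:R.
Proof.
move=> T_gt0 T3_le_r r_le_mT eps_ge0.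
have r_gt0 : (0 < r)%N by apply: leq_trans T3_le_r; rewrite expn_gt0 T_gt0.
have m_gt0 : (0 < m)%N.
  by rewrite lt0n; apply: contraTneq r_le_mT => ->; rewrite mul0n -ltnNge.
have := mid_bin_sqr_le m; rewrite -mulnn -[4%N]/(2 * 2)%N expnMn.
move: T3_le_r r_le_mT; rewrite -!(ler_nat R) !natrM.
set C := 'C(m, m./2)%:R; set P := (2 ^ m)%:R.
set Tr := T%:R; set rr := r%:R; set mr := m%:R.
move=> T3_le_r r_le_mT mid eps_sqr.
have rr_gt0 : 0 < rr by rewrite ltr0n.
have mr_gt0 : 0 < mr by rewrite ltr0n.
have eps_le10 : eps <= 10.
  have : eps ^+ 2 * rr <= 100 * rr by rewrite eps_sqr; lra.
  by rewrite ler_pM2r // => eps_sqr_le; nra.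
(* 3 m r (T C (1 + eps))^2 <= 242 T^3 m P^2 <= 300 T^3 m P^2 = 3 m r (eps P)^2 *)
have squares :
    (Tr * C * (1 + eps)) ^+ 2 * (3 * mr * rr) <= (eps * P) ^+ 2 * (3 * mr * rr).
  have weight_ge0 : 0 <= Tr ^+ 2 * (1 + eps) ^+ 2 * rr.
    by rewrite mulr_ge0 // mulr_ge0 ?sqr_ge0.
  have by_mid := ler_wpM2l weight_ge0 mid.
  have eps_term : (1 + eps) ^+ 2 * rr <= 121 * (mr * Tr) by nra.
  have by_eps := ler_wpM2l
    (mulr_ge0 (sqr_ge0 Tr) (mulr_ge0 (ler0n R 2) (sqr_ge0 P))) eps_term.
  have : 0 <= Tr ^+ 3 * mr * P ^+ 2.
    by rewrite mulr_ge0 ?sqr_ge0 // mulr_ge0 ?exprn_ge0.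
  have -> : (eps * P) ^+ 2 * (3 * mr * rr) = 3 * mr * P ^+ 2 * (eps ^+ 2 * rr) by ring.
  rewrite eps_sqr => M_ge0; move: by_mid by_eps; rewrite !expr2; lra.
rewrite -ler_sqr ?nnegrE ?mulr_ge0 ?addr_ge0 //.
by move: squares; rewrite ler_pM2r // !mulr_gt0.
Qed.

Theorem theorem4 (R : realType) :
  exists c0 : R, 0 < c0 /\
  forall (t r : nat), (1 <= t)%N -> ((2 ^ t) ^ 3 <= r)%N ->
  forall A : 'I_r -> {set 'Z_(2 ^ t)},
    (forall i, 2 <= #|A i|)%N ->
    bias_at_most (sumset_mult A)
      [set 0; (2 ^ t.-1)%:R]
      (c0 * ((2 ^ t)%:R * Num.sqrt ((2 ^ t)%:R)) / Num.sqrt (r%:R)).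
Proof.
exists 10; split=> [|[|t] r // _ T3_le_r A A_ge2]; first lra.
have r_gt0 : (0 < r)%N by apply: leq_trans T3_le_r; rewrite !expn_gt0.
set eps := _ / _.
have eps_ge0 : 0 <= eps by rewrite divr_ge0 ?sqrtr_ge0 // !mulr_ge0 ?ler0n ?sqrtr_ge0.
have eps_sqr : eps ^+ 2 * r%:R = 100 * (2 ^ t.+1)%:R ^+ 3.
  by rewrite /eps expr_div_n !exprMn !sqr_sqrtr ?ler0n //; field; rewrite pnatr_eq0 -lt0n.
move=> a h _; rewrite !inE => /orP[/eqP -> | /eqP ->].
  by rewrite addr0 ler_peMl ?ler0n // lerDl.
have K_gt0 : 0 < (\prod_i (2 * (#|A i| - 1)))%:R :> R.
  by rewrite ltr0n prodn_gt0 // => i; rewrite muln_gt0 subn_gt0 A_ge2.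
rewrite -(ler_pM2l K_gt0) mulrCA -!natrM !sumset_mult_pair_decomposition.
rewrite !natr_sum mulr_sumr; apply: ler_sum => p /forallP dp_p.
apply: subset_sum_count_bias => //.
- by rewrite card_ord.
- by move=> i; have /and3P[_ _] := dp_p i; rewrite subr_eq0 eq_sym.
- exact: Zp_pow2_half.
- move=> m; rewrite card_Zp_pow2 card_ord => r_le_mT.
  by apply: (@mid_bin_bias_bound _ _ r); rewrite ?expn_gt0.
Qed.
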